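(* Let $k\ge 1$ and a budget $p$ be given. For $j=1,\dots,k$ let $c_{a,j},c_{c,j}>0$, let $r_{a,j}:(0,\infty)\to(0,\infty)$ be positive, decreasing and at least twice continuously differentiable, and let $r_{c,j}:(0,\infty)\to(0,\infty)$ be positive, increasing and at least twice continuously differentiable. Let $w_j:(0,\infty)\to(0,\infty)$ and $\rho_j:(0,\infty)\to[-1,1]$ ($j=1,\dots,k$) be given functions (cost and correlation of the $j$-th low-fidelity model as a function of its number of training samples) with $1-\rho_j^2(n)\le c_{a,j}r_{a,j}(n)$ and $w_j(n)\le c_{c,j}r_{c,j}(n)$; set $n_0=0$, $w_0=1$. For $j=1$, let $p\ge 2$, define $u_1(n_1)=\frac{1}{p-n_1}\big(c_{a,1}r_{a,1}(n_1)+c_{c,1}r_{c,1}(n_1)\big)$ on $[1,p-1]$, assume $c_{a,1}r_{a,1}''+c_{c,1}r_{c,1}''>0$ on $[1,p-1]$, and let $n_1^*$ be the unique global minimizer of $u_1$ on $[1,p-1]$. Iteratively for $j=2,\dots,k$, given $n_1^*,\dots,n_{j-1}^*$, set $$p_{j-1}=p-\sum_{i=1}^{j-1}n_i^*,\quad \kappa_{j-1}=\sum_{i=0}^{j-2}w_i(n_i^* )\big(1-\rho_{i+1}^2(n_{i+1}^* )\big),\quad \hat c_{a,j}=w_{j-1}(n_{j-1}^* )\,c_{a,j},$$ (with $n_0^*=0$, $w_0(n_0^* )=1$), and consider $$u_j:[1,p_{j-1}-1]\to(0,\infty),\qquad u_j(n_j)=\frac{1}{p_{j-1}-n_j}\Big(\kappa_{j-1}+\hat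 c_{a,j}r_{a,j}(n_j)+c_{c,j}r_{c,j}(n_j)\Big).$$ If $p_{j-1}\ge 2$ and $$\hat c_{a,j}\,r_{a,j}''(n_j)+c_{c,j}\,r_{c,j}''(n_j)>0\quad\text{for all } n_j\in[1,p_{j-1}-1],$$ then there exists a unique minimizer $n_j^*\in[1,p_{j-1}-1]$ of $u_j$.
   Context: This describes the sequential construction of a hierarchy of low-fidelity models for context-aware multi-fidelity Monte Carlo estimation: $n_j$ is the number of high-fidelity evaluations used to train the $j$-th low-fidelity model, $p$ is the total budget in units of high-fidelity evaluations, and $u_j$ is (up to constant factors) an upper bound of the estimator's mean-squared error as a function of $n_j$ with $n_1^*,\dots,n_{j-1}^*$ fixed. *)

From Stdlib Require Import Reals Lra.
From Coquelicot Require Import Coquelicot.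
Open Scope R_scope.

Fixpoint psum (f : nat -> R) (n : nat) : R :=
  match n with O => 0 | S m => psum f m + f m end.

Definition wext (w : nat -> R -> R) (i : nat) (x : R) : R :=
  match i with O => 1 | _ => w i x end.

(* p_j = p - sum_{i=1}^{j} n_i^star  (so p_0 = p) *)
Definition pbud (p : R) (ns : nat -> R) (j : nat) : R :=
  p - psum (fun i => ns (S i)) j.

(* kappa_j = sum_{i=0}^{j-1} w_i(n_i^star) (1 - rho_{i+1}(n_{i+1}^star)^2)  (kappa_0 = 0) *)
Definition kappa (w rho : nat -> R -> R) (ns : nat -> R) (j : nat) : R :=
  psum (fun i => wext w i (ns i) * (1 - (rho (S i) (ns (S i)))^2)) j.

(* hat c_{a,j} = w_{j-1}(n_{j-1}^star) c_{a,j}  (= c_{a,1} for j = 1) *)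
Definition cahat (w : nat -> R -> R) (ca : nat -> R) (ns : nat -> R) (j : nat) : R :=
  wext w (pred j) (ns (pred j)) * ca j.

Definition uj (p : R) (ca cc : nat -> R) (ra rc w rho : nat -> R -> R)
  (ns : nat -> R) (j : nat) (n : R) : R :=
  (kappa w rho ns (pred j) + cahat w ca ns j * ra j n + cc j * rc j n)
  / (pbud p ns (pred j) - n).

Definition is_min_on (f : R -> R) (a b x : R) : Prop :=
  a <= x <= b /\ forall y, a <= y <= b -> f x <= f y.

Definition unique_min_on (f : R -> R) (a b x : R) : Prop :=
  is_min_on f a b x /\ forall y, is_min_on f a b y -> y = x.

Definition D2 (f : R -> R) : R -> R := Derive (Derive f).

Definition C2_pos (f : R -> R) : Prop :=
  forall x, 0 < x ->
    ex_derive f x /\ ex_derive (Derive f) x /\ continuous (D2 f) x.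

Definition pos_fun (f : R -> R) : Prop := forall x, 0 < x -> 0 < f x.
Definition decr_pos (f : R -> R) : Prop :=
  forall x y, 0 < x -> x <= y -> f y <= f x.
Definition incr_pos (f : R -> R) : Prop :=
  forall x y, 0 < x -> x <= y -> f x <= f y.

(** Every [u_j] has the form [N n / (P - n)] on [[1, P - 1]] with [N] strictly
    convex there.  It is continuous, so a minimizer exists.  If [x < y] were two
    minimizers with common value [m], then [h n := N n - m (P - n)] would be
    nonnegative on the interval and vanish at [x] and [y]; but [h] is strictly
    convex, so it is negative strictly between [x] and [y]. *)

From Stdlib Require Import Reals Lra.
From Coquelicot Require Import Coquelicot.
Open Scope R_scope.

Lemma mvt_interior (f df : R -> R) (a b x y : R) :
  (forall t, a <= t <= b -> is_derive f t (df t)) -> a <= x -> x < y -> y <= b ->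
  exists c, f y - f x = df c * (y - x) /\ x < c < y.
Proof.
  intros f_derive ax xy yb; apply MVT_cor2; [exact xy|].
  intros c xcy; apply is_derive_Reals, f_derive; lra.
Qed.

Section StrictlyConvex.

Variables (h dh d2h : R -> R) (a b : R).
Hypothesis h_derive : forall t, a <= t <= b -> is_derive h t (dh t).
Hypothesis dh_derive : forall t, a <= t <= b -> is_derive dh t (d2h t).
Hypothesis d2h_pos : forall t, a <= t <= b -> 0 < d2h t.

Lemma derive_strict_increasing (s t : R) : a <= s -> s < t -> t <= b -> dh s < dh t.
Proof.
  intros as_ st tb.
  destruct (mvt_interior dh d2h a b s t dh_derive as_ st tb) as [c [E sct]].
  assert (0 < d2h c) by (apply d2h_pos; lra).
  nra.
Qed.

Lemma chord_slope_lt (x t y : R) :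
  a <= x -> x < t -> t < y -> y <= b ->
  (h t - h x) / (t - x) < (h y - h t) / (y - t).
Proof.
  intros ax xt ty yb.
  destruct (mvt_interior h dh a b x t h_derive ax xt ltac:(lra)) as [c1 [E1 I1]].
  destruct (mvt_interior h dh a b t y h_derive ltac:(lra) ty yb) as [c2 [E2 I2]].
  rewrite E1, E2.
  replace (dh c1 * (t - x) / (t - x)) with (dh c1) by (field; lra).
  replace (dh c2 * (y - t) / (y - t)) with (dh c2) by (field; lra).
  apply derive_strict_increasing; lra.
Qed.

Lemma midpoint_neg_between_zeros (s t : R) :
  a <= s -> s < t -> t <= b -> h s = 0 -> h t = 0 -> h ((s + t) / 2) < 0.
Proof.
  intros as_ st tb hs0 ht0.
  set (mid := (s + t) / 2).
  pose proof (chord_slope_lt s mid t as_ ltac:(unfold mid; lra) ltac:(unfold mid; lra) tb)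
    as slopes.
  rewrite hs0, ht0 in slopes.
  replace (t - mid) with (mid - s) in slopes by (unfold mid; lra).
  assert (0 < / (mid - s)) by (apply Rinv_0_lt_compat; unfold mid; lra).
  unfold Rdiv in slopes; nra.
Qed.

Lemma nonneg_strict_convex_zero_unique (x y : R) :
  (forall t, a <= t <= b -> 0 <= h t) ->
  a <= x <= b -> a <= y <= b -> h x = 0 -> h y = 0 -> x = y.
Proof.
  intros h_ge0 Ix Iy hx0 hy0.
  destruct (Rtotal_order x y) as [xy | [xy | yx]]; [exfalso | exact xy | exfalso].
  - pose proof (midpoint_neg_between_zeros x y ltac:(lra) xy ltac:(lra) hx0 hy0).
    assert (0 <= h ((x + y) / 2)) by (apply h_ge0; lra).
    lra.
  - pose proof (midpoint_neg_between_zeros y x ltac:(lra) yx ltac:(lra) hy0 hx0).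
    assert (0 <= h ((y + x) / 2)) by (apply h_ge0; lra).
    lra.
Qed.

End StrictlyConvex.

Section ConvexOverLinear.

Variables (N dN d2N : R -> R) (a b P : R).
Hypothesis a_le_b : a <= b.
Hypothesis b_lt_P : b < P.
Hypothesis N_derive : forall t, a <= t <= b -> is_derive N t (dN t).
Hypothesis dN_derive : forall t, a <= t <= b -> is_derive dN t (d2N t).
Hypothesis d2N_pos : forall t, a <= t <= b -> 0 < d2N t.

Let f (t : R) : R := N t / (P - t).

Lemma ratio_min_exists : exists x, is_min_on f a b x.
Proof.
  destruct (continuity_ab_min f a b) as [x [x_min Ix]]; [exact a_le_b| |].
  - intros t It; apply continuity_pt_filterlim, (ex_derive_continuous f t).
    unfold f; auto_derive; split; [exists (dN t); apply N_derive; exact It | split; [lra|exact I]].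
  - exists x; split; [exact Ix | exact x_min].
Qed.

Lemma ratio_min_unique (x y : R) : is_min_on f a b x -> is_min_on f a b y -> x = y.
Proof.
  intros [Ix x_min] [Iy y_min].
  set (m := f x).
  set (h := fun t => N t - m * (P - t)).
  assert (N_eq : forall t, a <= t <= b -> N t = f t * (P - t))
    by (intros t It; unfold f; field; lra).
  assert (h_ge0 : forall t, a <= t <= b -> 0 <= h t).
  { intros t It; unfold h; rewrite (N_eq t It).
    assert (m <= f t) by exact (x_min t It).
    nra. }
  assert (h_zero : forall t, a <= t <= b -> f t = m -> h t = 0)
    by (intros t It ft; unfold h; rewrite (N_eq t It), ft; ring).
  apply (nonneg_strict_convex_zero_unique h (fun t => dN t + m) d2N a b).
  - intros t It; unfold h; auto_derive; [exists (dN t); apply N_derive; exact It|].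
    erewrite is_derive_unique by (apply N_derive; exact It); ring.
  - intros t It; auto_derive; [exists (d2N t); apply dN_derive; exact It|].
    erewrite is_derive_unique by (apply dN_derive; exact It); ring.
  - exact d2N_pos.
  - exact h_ge0.
  - exact Ix.
  - exact Iy.
  - exact (h_zero x Ix eq_refl).
  - apply h_zero; [exact Iy|].
    specialize (x_min y Iy); specialize (y_min x Ix); unfold m; lra.
Qed.

Lemma ratio_unique_min : exists! x, is_min_on f a b x.
Proof.
  destruct ratio_min_exists as [x x_min].
  exists x; split; [exact x_min|].
  intros y y_min; exact (ratio_min_unique x y x_min y_min).
Qed.

End ConvexOverLinear.

Theorem proposition3
  (k : nat) (p : R) (ca cc : nat -> R) (ra rc w rho : nat -> R -> R)
  (hk : (1 <= k)%nat)
  (Hca : forall j, (1 <= j <= k)%nat -> 0 < ca j)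
  (Hcc : forall j, (1 <= j <= k)%nat -> 0 < cc j)
  (Hra : forall j, (1 <= j <= k)%nat -> pos_fun (ra j) /\ decr_pos (ra j) /\ C2_pos (ra j))
  (Hrc : forall j, (1 <= j <= k)%nat -> pos_fun (rc j) /\ incr_pos (rc j) /\ C2_pos (rc j))
  (Hw : forall j, (1 <= j <= k)%nat -> pos_fun (w j))
  (Hrho : forall j, (1 <= j <= k)%nat -> forall x, 0 < x -> -1 <= rho j x <= 1)
  (Hrhob : forall j, (1 <= j <= k)%nat -> forall x, 0 < x ->
             1 - (rho j x)^2 <= ca j * ra j x)
  (Hwb : forall j, (1 <= j <= k)%nat -> forall x, 0 < x -> w j x <= cc j * rc j x)
  (j : nat) (ns : nat -> R) (hj : (1 <= j <= k)%nat)
  (Hprev : forall i, (1 <= i < j)%nat ->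
     unique_min_on (uj p ca cc ra rc w rho ns i) 1 (pbud p ns (pred i) - 1) (ns i))
  (Hp : 2 <= pbud p ns (pred j))
  (Hconv : forall x, 1 <= x <= pbud p ns (pred j) - 1 ->
     0 < cahat w ca ns j * D2 (ra j) x + cc j * D2 (rc j) x) :
  exists! x, is_min_on (uj p ca cc ra rc w rho ns j) 1 (pbud p ns (pred j) - 1) x.
Proof.
  destruct (Hra j hj) as [_ [_ ra_C2]]; destruct (Hrc j hj) as [_ [_ rc_C2]].
  apply (ratio_unique_min
           (fun s => kappa w rho ns (pred j) + cahat w ca ns j * ra j s + cc j * rc j s)
           (fun s => cahat w ca ns j * Derive (ra j) s + cc j * Derive (rc j) s)
           (fun s => cahat w ca ns j * D2 (ra j) s + cc j * D2 (rc j) s));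
    [lra | lra | | | exact Hconv]; intros t It;
    destruct (ra_C2 t ltac:(lra)) as [ra_ex [dra_ex _]];
    destruct (rc_C2 t ltac:(lra)) as [rc_ex [drc_ex _]];
    auto_derive; try tauto; rewrite !Rmult_1_l; reflexivity.
Qed.
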